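(* Let $U=\sum_{j=0}^3c_j\sigma_j\otimes\sigma_j$ be a normalized two-qubit unitary with parameters $x,y,z$ and $c_2=c_3$, and write $E(\alpha,\beta):=E(\varphi(\alpha,\beta;\frac{\pi}{2},\frac{\pi}{2}))$. (i) $\max_{\alpha,\beta\in[0,\pi/2]}E(\alpha,\beta)=\max_{\alpha\in[0,\pi/4],\beta\in[0,\pi/2]}E(\alpha,\beta)=\max_{\alpha\in[0,\pi/2],\beta\in[0,\pi/4]}E(\alpha,\beta)$. (ii) Let $B=\{(\alpha,\beta)\in[0,\pi/4]\times[0,\pi/2]:\ \alpha\in\{0,\pi/4\}\text{ or }\beta\in\{0,\pi/4\}\}$. Then $$\max_{(\alpha,\beta)\in B}E(\alpha,\beta)=\begin{cases}\max\{1,E(\tfrac{\pi}{4},\tfrac{\pi}{4})\}, & \cos(2x+2y)\le0,\\ \max\{E(0,\tfrac{\pi}{2}),E(\tfrac{\pi}{4},\tfrac{\pi}{4})\}, & \cos(2x+2y)>0.\end{cases}$$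
   Context: Pauli matrices: $\sigma_0=I$, $\sigma_1=\begin{pmatrix}0&1\\1&0\end{pmatrix}$, $\sigma_2=\begin{pmatrix}0&-i\\i&0\end{pmatrix}$, $\sigma_3=\begin{pmatrix}1&0\\0&-1\end{pmatrix}$. For real $x,y,z$ set $c_0=\cos x\cos y\cos z+i\sin x\sin y\sin z$, $c_1=\cos x\sin y\sin z+i\sin x\cos y\cos z$, $c_2=\sin x\cos y\sin z+i\cos x\sin y\cos z$, $c_3=\sin x\sin y\cos z+i\cos x\cos y\sin z$, and $U=\sum_{j=0}^3c_j\sigma_j\otimes\sigma_j$ acting on qubits $A,B$. $U$ is called normalized if $\pi/4\ge x\ge y\ge z\ge0$ and $0<y<\pi/4$. $E(\varphi(\alpha,\beta;\frac{\pi}{2},\frac{\pi}{2}))$ denotes the entanglement entropy $S(\mathrm{Tr}_{AR_A}|\chi\rangle\langle\chi|)$ (von Neumann entropy, base-2 logarithm) of $|\chi\rangle=U\big((\cos\alpha|00\rangle+\sin\alpha|11\rangle)_{AR_A}\otimes(\cos\beta|00\rangle+\sin\beta|11\rangle)_{BR_B}\big)$, with $R_A,R_B$ qubits and $U$ acting on $A,B$. *)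

From HB Require Import structures.
From mathcomp Require Import all_boot all_order all_algebra.
From mathcomp Require Import all_classical all_reals all_analysis.
From mathcomp.real_closed Require Import complex mxtens.

Set Implicit Arguments.
Unset Strict Implicit.
Unset Printing Implicit Defensive.

Import Order.TTheory GRing.Theory Num.Theory.
Local Open Scope ring_scope.
Local Open Scope complex_scope.

Section Defs.
Variable R : realType.
Local Notation C := R[i].

Definition cconj (w : C) : C := let: a +i* b := w in a -i* b.

Definition pauli (j : 'I_4) : 'M[C]_2 :=
  \matrix_(r < 2, s < 2)
    match val j with
    | 0%N => if r == s then 1 else 0
    | 1%N => if r == s then 0 else 1
    | 2%N => if r == s then 0 else if val r == 0%N then - 'i else 'i
    | _ => if r == s then (if val r == 0%N then 1 else -1) else 0
    end.

Definition coef_c (x y z : R) (j : 'I_4) : C :=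
  match val j with
  | 0%N => (cos x * cos y * cos z) +i* (sin x * sin y * sin z)
  | 1%N => (cos x * sin y * sin z) +i* (sin x * cos y * cos z)
  | 2%N => (sin x * cos y * sin z) +i* (cos x * sin y * cos z)
  | _ => (sin x * sin y * cos z) +i* (cos x * cos y * sin z)
  end.

(* U = sum_j c_j sigma_j (x) sigma_j acting on qubits A,B; index (a,b) <-> mxtens_index (a,b) *)
Definition Uxyz (x y z : R) : 'M[C]_(2 * 2) :=
  \sum_(j < 4) coef_c x y z j *: (pauli j *t pauli j).

Definition normalized (x y z : R) : Prop :=
  pi / 4 >= x /\ x >= y /\ y >= z /\ z >= 0 /\ 0 < y /\ y < pi / 4.

(* coefficient <q r| of cos t |00> + sin t |11> *)
Definition bell (t : R) (q r : 'I_2) : C :=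
  if q == r then (if val q == 0%N then (cos t)%:C else (sin t)%:C) else 0.

(* coefficient <a ra b rb| chi>, chi = (U_AB (x) I_{R_A R_B}) (psi_{A R_A} (x) psi_{B R_B}) *)
Definition chi (x y z al be : R) (a ra b rb : 'I_2) : C :=
  \sum_(a' < 2) \sum_(b' < 2)
     Uxyz x y z (mxtens_index (a, b)) (mxtens_index (a', b'))
     * bell al a' ra * bell be b' rb.

(* reduced state Tr_{A R_A} |chi><chi| on B R_B, index (b,rb) <-> mxtens_index (b,rb) *)
Definition rhoBRB (x y z al be : R) : 'M[C]_(2 * 2) :=
  \matrix_(k, l)
    \sum_(a < 2) \sum_(ra < 2)
      chi x y z al be a ra (mxtens_unindex k).1 (mxtens_unindex k).2
      * cconj (chi x y z al be a ra (mxtens_unindex l).1 (mxtens_unindex l).2).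

Definition log2 (t : R) : R := ln t / ln 2.

(* eigenvalues with multiplicity: a real vector whose entries are the roots of the
   characteristic polynomial (exists for Hermitian matrices; unique up to permutation) *)
Definition real_spectrum n (M : 'M[C]_n) : 'rV[R]_n :=
  xget 0 (fun lam : 'rV[R]_n =>
    char_poly M = \prod_(i < n) ('X - ((lam 0 i)%:C)%:P)).

(* von Neumann entropy, base-2 logarithm (0 log 0 = 0 since ln 0 = 0) *)
Definition vN_entropy n (M : 'M[C]_n) : R :=
  - \sum_(i < n) (real_spectrum M 0 i * log2 (real_spectrum M 0 i)).

Definition Ent (x y z al be : R) : R := vN_entropy (rhoBRB x y z al be).

End Defs.

From HB Require Import structures.
From mathcomp Require Import all_boot all_order all_algebra.
From mathcomp Require Import all_classical all_reals all_analysis.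
From mathcomp.real_closed Require Import complex mxtens.
From mathcomp Require Import ring lra.

Set Implicit Arguments.
Unset Strict Implicit.
Unset Printing Implicit Defensive.
Import Order.TTheory GRing.Theory Num.Theory.
Local Open Scope ring_scope.

(* In the basis |00>, |01>, |10>, |11> of B R_B the reduced state only couples |00> with |11>
   and |01> with |10>, because U and both Schmidt states preserve the parity of a two-qubit
   index.  Each 2 x 2 block has an explicit trace and determinant in cos^2, sin^2 of alpha,
   beta and |c0 +- c3|^2, |c1 -+ c2|^2, so E is the sum, over the two blocks, of the entropy
   of the roots of X^2 - s X + d; at fixed s this entropy increases with d, by convexity of
   t ln t.
   The substitution (alpha, beta) -> (pi/2 - alpha, pi/2 - beta) leaves both blocks unchanged,
   which gives (i); E is also symmetric in alpha and beta.  On alpha = pi/4 the traces do not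
   depend on beta and the determinants are largest at beta = pi/4.  On alpha = 0 the
   determinants vanish and E is the binary entropy of
   p(beta) = cos^2 beta cos^2 (x - y) + sin^2 beta cos^2 (x + y).  For normalized x, y,
   cos^2 (x + y) < cos^2 (x - y) and cos^2 (x - y) >= 1/2, so p takes the value 1/2
   (entropy 1) iff cos^2 (x + y) <= 1/2, i.e. cos (2x + 2y) <= 0; otherwise p stays above
   1/2 and E is largest at beta = pi/2. *)

Section PairEntropy.
Variable R : realType.
Implicit Types a b t u m p q : R.

Definition xlnx t := t * ln t.

Lemma xlnx_ge_tangent u m : 0 <= u -> 0 < m -> u * ln m + u - m <= xlnx u.
Proof.
rewrite /xlnx => u_ge0 m_gt0; have [->|u_neq0] := eqVneq u 0.
  by rewrite !mul0r add0r sub0r oppr_le0 ltW.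
have u_gt0 : 0 < u by rewrite lt_def u_neq0.
have : ln (m / u) <= m / u - 1.
  have /le_ln1Dx : -1 < m / u - 1 by rewrite ltrBrDl subrr divr_gt0.
  by rewrite addrC subrK.
rewrite ln_div ?posrE // -(ler_pM2l u_gt0) mulrBr mulrBr mulr1 mulrCA divff ?mulr1 //.
lra.
Qed.

Lemma xlnx_convex a b t : 0 <= a -> 0 <= b -> 0 <= t <= 1 ->
  xlnx (t * a + (1 - t) * b) <= t * xlnx a + (1 - t) * xlnx b.
Proof.
move=> a_ge0 b_ge0 /andP[t_ge0 t_le1]; have t'_ge0 : 0 <= 1 - t by rewrite subr_ge0.
set m := t * a + (1 - t) * b.
have [m0|m_neq0] := eqVneq m 0.
  have /andP[/eqP ta0 /eqP tb0] : (t * a == 0) && ((1 - t) * b == 0).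
    by rewrite -paddr_eq0 ?mulr_ge0 // -/m m0.
  by rewrite m0 /xlnx mul0r !mulrA ta0 tb0 !mul0r addr0.
have m_gt0 : 0 < m by rewrite lt_def m_neq0 addr_ge0 ?mulr_ge0.
(* the tangent lines of [xlnx] at [m], averaged with weights [t] and [1 - t], meet at [xlnx m] *)
have -> : xlnx m = t * (a * ln m + a - m) + (1 - t) * (b * ln m + b - m) by rewrite /xlnx /m; ring.
exact: lerD (ler_wpM2l t_ge0 (xlnx_ge_tangent a_ge0 m_gt0))
            (ler_wpM2l t'_ge0 (xlnx_ge_tangent b_ge0 m_gt0)).
Qed.

Definition pair_entropy p q := - (p * log2 p + q * log2 q).

Lemma between_convex_comb a b u : (u - a) * (u - b) <= 0 ->
  exists2 t, 0 <= t <= 1 & u = t * a + (1 - t) * b.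
Proof.
have [<-|a_neq_b] := eqVneq a b => u_between.
  exists 1; first by rewrite ler01 lexx.
  have : (u - a) ^+ 2 <= 0 by rewrite expr2.
  by rewrite le_eqVlt ltNge sqr_ge0 orbF sqrf_eq0 subr_eq0 => /eqP ->; ring.
have ab_neq0 : a - b != 0 by rewrite subr_eq0.
exists ((u - b) / (a - b)); last by field.
have : 0 <= (u - b) / (a - b) * (1 - (u - b) / (a - b)).
  have -> : (u - b) / (a - b) * (1 - (u - b) / (a - b)) = - ((u - a) * (u - b)) / (a - b) ^+ 2.
    by field.
  by rewrite divr_ge0 ?sqr_ge0 // oppr_ge0.
set t := _ / _; move=> t_mid; apply/andP; split; nra.
Qed.

(* Same sum and a larger product put [a'] and [b'] between [a] and [b]; conclude by convexity. *)
Lemma xlnx_pair_le a b a' b' : 0 <= a -> 0 <= b ->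
  a + b = a' + b' -> a * b <= a' * b' -> xlnx a' + xlnx b' <= xlnx a + xlnx b.
Proof.
move=> a_ge0 b_ge0 sum_eq prod_le.
have [t t01 a'E] : exists2 t, 0 <= t <= 1 & a' = t * a + (1 - t) * b.
  apply: between_convex_comb.
  have -> : (a' - a) * (a' - b) = a * b - a' * b' by rewrite (_ : b' = a + b - a'); [ring | lra].
  by rewrite subr_le0.
have b'E : b' = (1 - t) * a + (1 - (1 - t)) * b.
  by apply: (addrI a'); rewrite -sum_eq a'E; ring.
rewrite a'E b'E.
have t'01 : 0 <= 1 - t <= 1 by case/andP: t01 => ? ?; apply/andP; split; lra.
have -> : xlnx a + xlnx b =
    (t * xlnx a + (1 - t) * xlnx b) + ((1 - t) * xlnx a + (1 - (1 - t)) * xlnx b) by ring.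
exact: lerD (xlnx_convex a_ge0 b_ge0 t01) (xlnx_convex a_ge0 b_ge0 t'01).
Qed.

Lemma ln2_gt0 : 0 < ln (2 : R).
Proof. by rewrite ln_gt0 // ltr1n. Qed.

Lemma pair_entropyE p q : pair_entropy p q = - (xlnx p + xlnx q) / ln 2.
Proof. by rewrite /pair_entropy /xlnx /log2 !mulrA mulNr mulrDl. Qed.

Lemma pair_entropy_le a b a' b' : 0 <= a -> 0 <= b ->
  a + b = a' + b' -> a * b <= a' * b' -> pair_entropy a b <= pair_entropy a' b'.
Proof.
move=> a_ge0 b_ge0 sum_eq prod_le; rewrite !pair_entropyE ler_pM2r ?invr_gt0 ?ln2_gt0 //.
by rewrite lerN2; apply: xlnx_pair_le.
Qed.

Lemma pair_entropy_half : pair_entropy 2^-1 2^-1 = 1.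
Proof.
rewrite /pair_entropy /log2 lnV ?posrE // mulNr divff ?gt_eqF ?ln2_gt0 //.
by field.
Qed.

Lemma binary_entropy_le1 p : 0 <= p <= 1 -> pair_entropy p (1 - p) <= 1.
Proof.
case/andP=> p_ge0 p_le1; rewrite -[X in _ <= X]pair_entropy_half.
apply: pair_entropy_le; rewrite ?subr_ge0 //; first by field.
by rewrite -subr_ge0 (_ : _ - _ = (p - 2^-1) ^+ 2) ?sqr_ge0 //; field.
Qed.

Lemma pair_entropy_add0 p q : pair_entropy p 0 + pair_entropy q 0 = pair_entropy p q.
Proof. by rewrite /pair_entropy !mul0r; ring. Qed.

End PairEntropy.

Section QuadraticRoots.
Variable R : realType.
Implicit Types s d : R.

Definition root_hi s d := (s + Num.sqrt (s ^+ 2 - 4 * d)) / 2.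
Definition root_lo s d := (s - Num.sqrt (s ^+ 2 - 4 * d)) / 2.

Definition quad_entropy s d := pair_entropy (root_hi s d) (root_lo s d).

Lemma root_hiDlo s d : root_hi s d + root_lo s d = s.
Proof. by rewrite /root_hi /root_lo; field. Qed.

Lemma root_hiMlo s d : 0 <= s ^+ 2 - 4 * d -> root_hi s d * root_lo s d = d.
Proof.
move=> disc_ge0; rewrite /root_hi /root_lo; set q := Num.sqrt _.
have q_sq : q ^+ 2 = s ^+ 2 - 4 * d by rewrite sqr_sqrtr.
transitivity ((s ^+ 2 - q ^+ 2) / 4); first by field.
by rewrite q_sq; field.
Qed.

Lemma root_hi_ge0 s d : 0 <= s -> 0 <= root_hi s d.
Proof. by move=> s_ge0; rewrite divr_ge0 // addr_ge0 // sqrtr_ge0. Qed.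

Lemma root_lo_ge0 s d : 0 <= s -> 0 <= d -> 0 <= root_lo s d.
Proof.
move=> s_ge0 d_ge0; rewrite divr_ge0 // subr_ge0.
rewrite -[X in _ <= X](ger0_norm s_ge0) -sqrtr_sqr ler_sqrt ?sqr_ge0 //.
by rewrite lerBlDr lerDl mulr_ge0.
Qed.

Lemma quad_entropy_le s d d' : 0 <= s -> 0 <= d -> d <= d' -> 0 <= s ^+ 2 - 4 * d' ->
  quad_entropy s d <= quad_entropy s d'.
Proof.
move=> s_ge0 d_ge0 d_le disc'_ge0.
have disc_ge0 : 0 <= s ^+ 2 - 4 * d.
  by apply: le_trans disc'_ge0 _; rewrite lerD2l lerN2 ler_wpM2l.
apply: pair_entropy_le; rewrite ?root_hi_ge0 ?root_lo_ge0 //.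
  by rewrite !root_hiDlo.
by rewrite !root_hiMlo.
Qed.

Lemma quad_entropy_det0 s : 0 <= s -> quad_entropy s 0 = pair_entropy s 0.
Proof.
move=> s_ge0; rewrite /quad_entropy /root_hi /root_lo mulr0 subr0 sqrtr_sqr ger0_norm //.
by rewrite subrr mul0r; congr pair_entropy; field.
Qed.

End QuadraticRoots.

Section Trigonometry.
Variable R : realType.
Implicit Types t k : R.

Lemma cos_pihalfB t : cos (pi / 2 - t) = sin t.
Proof. by rewrite -opprB cosN cosBpihalf. Qed.

Lemma sin_pihalfB t : sin (pi / 2 - t) = cos t.
Proof. by rewrite -opprB sinN sinBpihalf opprK. Qed.

Lemma cos_twice t : cos (2 * t) = 2 * cos t ^+ 2 - 1.
Proof. by rewrite mulr_natl cos_mulr2n mulr_natl. Qed.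

Lemma cos_pi4_sqr : cos (pi / 4) ^+ 2 = 2^-1 :> R.
Proof.
have := cos_twice (pi / 4); rewrite (_ : 2 * (pi / 4) = pi / 2) ?cos_pihalf; last by field.
lra.
Qed.

Lemma sin_pi4_sqr : sin (pi / 4) ^+ 2 = 2^-1 :> R.
Proof. by rewrite sin2cos2 cos_pi4_sqr; field. Qed.

Lemma cos_sqrMsin_sqr_le t : cos t ^+ 2 * sin t ^+ 2 <= 4^-1.
Proof.
have := sqr_ge0 (cos t ^+ 2 - sin t ^+ 2); have := cos2Dsin2 t.
move: (cos t ^+ 2) (sin t ^+ 2) => c s; nra.
Qed.

Lemma exists_cos_sqr k : 0 <= k <= 1 -> exists2 t, 0 <= t <= pi / 2 & cos t ^+ 2 = k.
Proof.
case/andP=> k_ge0 k_le1; have sk_ge0 := sqrtr_ge0 k.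
have sk_le1 : Num.sqrt k <= 1 by rewrite -sqrtr1 ler_wsqrtr.
have sk_itv : -1 <= Num.sqrt k <= 1 by rewrite sk_le1 (le_trans _ sk_ge0) // lerN10.
have cos_acos : cos (acos (Num.sqrt k)) = Num.sqrt k by rewrite acosK // in_itv.
exists (acos (Num.sqrt k)); last by rewrite cos_acos sqr_sqrtr.
rewrite acos_ge0 //= leNgt; apply/negP => acos_gt.
have : sin (acos (Num.sqrt k) - pi / 2) > 0.
  rewrite sin_gt0_pi // subr_gt0 acos_gt /= ltrBlDr (le_lt_trans (acos_lepi sk_itv)) //.
  by rewrite ltrDl divr_gt0 ?pi_gt0.
by rewrite sinBpihalf cos_acos oppr_gt0 ltNge sk_ge0.
Qed.

End Trigonometry.

Section BlockInvariants.
Variable R : realType.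
Implicit Types p q n al be : R.

Definition blk_trace p q al be := cos be ^+ 2 * (cos al ^+ 2 * p + sin al ^+ 2 * q)
                                + sin be ^+ 2 * (cos al ^+ 2 * q + sin al ^+ 2 * p).
Definition blk_det n al be := cos al ^+ 2 * sin al ^+ 2 * cos be ^+ 2 * sin be ^+ 2 * n.

Lemma blk_trace_ge0 p q al be : 0 <= p -> 0 <= q -> 0 <= blk_trace p q al be.
Proof.
move=> p_ge0 q_ge0; rewrite /blk_trace.
by apply: addr_ge0; apply: mulr_ge0 (sqr_ge0 _) _; apply: addr_ge0; apply: mulr_ge0 (sqr_ge0 _) _.
Qed.

Lemma blk_det_ge0 n al be : 0 <= n -> 0 <= blk_det n al be.
Proof. by move=> n_ge0; rewrite /blk_det -!exprMn mulr_ge0 ?sqr_ge0. Qed.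

Lemma blk_trace_compl p q al be :
  blk_trace p q (pi / 2 - al) (pi / 2 - be) = blk_trace p q al be.
Proof. by rewrite /blk_trace !cos_pihalfB !sin_pihalfB; ring. Qed.

Lemma blk_det_compl n al be : blk_det n (pi / 2 - al) (pi / 2 - be) = blk_det n al be.
Proof. by rewrite /blk_det !cos_pihalfB !sin_pihalfB; ring. Qed.

Lemma blk_traceC p q al be : blk_trace p q al be = blk_trace p q be al.
Proof. by rewrite /blk_trace; ring. Qed.

Lemma blk_detC n al be : blk_det n al be = blk_det n be al.
Proof. by rewrite /blk_det; ring. Qed.

Lemma blk_trace_pi4 p q be : blk_trace p q (pi / 4) be = (p + q) / 2.
Proof.
rewrite /blk_trace cos_pi4_sqr sin_pi4_sqr.
transitivity ((cos be ^+ 2 + sin be ^+ 2) * ((p + q) / 2)); first by field.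
by rewrite cos2Dsin2 mul1r.
Qed.

Lemma blk_det_pi4_le n be : 0 <= n -> blk_det n (pi / 4) be <= blk_det n (pi / 4) (pi / 4).
Proof.
move=> n_ge0; rewrite /blk_det cos_pi4_sqr sin_pi4_sqr.
have := cos_sqrMsin_sqr_le be; move: (cos be ^+ 2) (sin be ^+ 2) => c s; nra.
Qed.

Lemma blk_trace_alpha0 p q be : blk_trace p q 0 be = cos be ^+ 2 * p + sin be ^+ 2 * q.
Proof. by rewrite /blk_trace cos0 sin0; ring. Qed.

Lemma blk_det_alpha0 n be : blk_det n 0 be = 0.
Proof. by rewrite /blk_det sin0; ring. Qed.

End BlockInvariants.

Local Open Scope complex_scope.

Lemma det_mx4_blocks (T : comNzRingType) (f : nat -> nat -> T) :
  f 0 1 = 0 -> f 0 2 = 0 -> f 1 0 = 0 -> f 1 3 = 0 ->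
  f 2 0 = 0 -> f 2 3 = 0 -> f 3 1 = 0 -> f 3 2 = 0 ->
  \det (\matrix_(i < 4, j < 4) f i j) =
  (f 0 0 * f 3 3 - f 0 3 * f 3 0) * (f 1 1 * f 2 2 - f 1 2 * f 2 1).
Proof.
move=> f01 f02 f10 f13 f20 f23 f31 f32.
do 3!rewrite !(expand_det_row _ ord0) !big_ord_recl !big_ord0 /cofactor.
rewrite !det_mx11 !mxE /= /bump /=.
rewrite f01 f02 f10 f13 f20 f23 f31 f32 !expr0 !expr1 ?expr2 ?sqrrN ?expr1n /=.
ring.
Qed.

(* Locked, so that [rmorphD] and friends cannot rewrite inside its body. *)
HB.lock Definition abs2 (R : rcfType) (w : R[i]) : R := complex.Re w ^+ 2 + complex.Im w ^+ 2.

Lemma abs2C (R : rcfType) (w : R[i]) : (abs2 w)%:C = w * w^*%C.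
Proof. by case: w => a b; rewrite unlock /=; simpc; rewrite !expr2 [b * a]mulrC addNr. Qed.

Lemma abs2_ge0 (R : rcfType) (w : R[i]) : 0 <= abs2 w.
Proof. by rewrite unlock addr_ge0 ?sqr_ge0. Qed.

(* Lets [/=] evaluate the [match]es below without expanding complex conjugates. *)
#[local] Arguments conjc : simpl never.

Lemma abs2_cross (R : rcfType) (a b : R) (p q : R[i]) :
  (a * abs2 p + b * abs2 q) * (a * abs2 q + b * abs2 p) - a * b * abs2 (p ^+ 2 - q ^+ 2)
    = abs2 (a%:C * p * q^*%C + b%:C * q * p^*%C).
Proof.
apply: (@complexI R); rewrite !(rmorphD, rmorphB, rmorphN, rmorphM) /= !abs2C.
by rewrite !(rmorphD, rmorphB, rmorphN, rmorphM) /= !conjc_real !conjcK; ring.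
Qed.

Lemma blk_disc_ge0 (R : realType) (p q : R[i]) (al be : R) :
  0 <= blk_trace (abs2 p) (abs2 q) al be ^+ 2 - 4 * blk_det (abs2 (p ^+ 2 - q ^+ 2)) al be.
Proof.
rewrite /blk_trace /blk_det.
move: (cos al ^+ 2) (sin al ^+ 2) (cos be ^+ 2) (sqr_ge0 (cos be)) (sin be ^+ 2) (sqr_ge0 (sin be)).
move=> a b c c_ge0 d d_ge0; set A := a * abs2 p + b * abs2 q; set B := a * abs2 q + b * abs2 p.
(* the discriminant is a square plus [4 c d] times the nonnegative cross term [abs2_cross] *)
have -> : (c * A + d * B) ^+ 2 - 4 * (a * b * c * d * abs2 (p ^+ 2 - q ^+ 2))
    = (c * A - d * B) ^+ 2 + 4 * (c * d) * (A * B - a * b * abs2 (p ^+ 2 - q ^+ 2)) by ring.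
by rewrite abs2_cross addr_ge0 ?sqr_ge0 // !mulr_ge0 ?abs2_ge0.
Qed.

Section Spectrum.
Variable R : realType.
Local Notation C := R[i].

Lemma vN_entropyE n (M : 'M[C]_n) (lam : 'rV[R]_n) :
  char_poly M = \prod_(i < n) ('X - ((lam 0 i)%:C)%:P) ->
  vN_entropy M = - \sum_(i < n) lam 0 i * log2 (lam 0 i).
Proof.
move=> charM; rewrite /vN_entropy; set mu := real_spectrum M.
have charM_mu : char_poly M = \prod_(i < n) ('X - ((mu 0 i)%:C)%:P).
  by rewrite /mu /real_spectrum; apply: (@xgetPex _ 0 (fun lam : 'rV[R]_n =>
    char_poly M = \prod_(i < n) ('X - ((lam 0 i)%:C)%:P))); exists lam.
have mu_perm : perm_eq [seq mu 0 i | i <- index_enum 'I_n] [seq lam 0 i | i <- index_enum 'I_n].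
  apply: (@perm_map_inj _ _ (real_complex R)); first exact: complexI.
  by apply: prod_XsubC_eq; rewrite -!map_comp !big_map -charM_mu -charM.
congr (- _).
rewrite -(big_map (fun i => mu 0 i) predT (fun t => t * log2 t)).
by rewrite -(big_map (fun i => lam 0 i) predT (fun t => t * log2 t)) (perm_big _ mu_perm).
Qed.

Lemma root_factor s d : 0 <= s ^+ 2 - 4 * d ->
  ('X - ((root_hi s d)%:C)%:P) * ('X - ((root_lo s d)%:C)%:P)
    = 'X ^+ 2 - (s%:C)%:P * 'X + (d%:C)%:P :> {poly C}.
Proof.
move=> disc_ge0; have := root_hiMlo disc_ge0; have := root_hiDlo s d.
move: (root_hi s d) (root_lo s d) => r1 r2 <- <-.
by rewrite rmorphD rmorphM polyCD polyCM; ring.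
Qed.

Lemma vN_entropy_quad2 (M : 'M[C]_4) s1 d1 s2 d2 :
  0 <= s1 ^+ 2 - 4 * d1 -> 0 <= s2 ^+ 2 - 4 * d2 ->
  char_poly M = ('X ^+ 2 - (s1%:C)%:P * 'X + (d1%:C)%:P)
                  * ('X ^+ 2 - (s2%:C)%:P * 'X + (d2%:C)%:P) ->
  vN_entropy M = quad_entropy s1 d1 + quad_entropy s2 d2.
Proof.
move=> disc1 disc2 charM.
pose lam := \row_(i < 4) nth 0 [:: root_hi s1 d1; root_lo s1 d1; root_hi s2 d2; root_lo s2 d2] i.
rewrite (@vN_entropyE _ _ lam); last first.
  rewrite charM -(root_factor disc1) -(root_factor disc2).
  by rewrite !big_ord_recl big_ord0 !mxE /= mulr1 !mulrA.
by rewrite !big_ord_recl big_ord0 !mxE /quad_entropy /pair_entropy /=; ring.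
Qed.

End Spectrum.

Section ReducedState.
Variable R : realType.
Local Notation C := R[i].
Implicit Types x y z al be : R.

Definition c0 x y z : C := (cos x * cos y * cos z) +i* (sin x * sin y * sin z).
Definition c1 x y z : C := (cos x * sin y * sin z) +i* (sin x * cos y * cos z).
Definition c2 x y z : C := (sin x * cos y * sin z) +i* (cos x * sin y * cos z).
Definition c3 x y z : C := (sin x * sin y * cos z) +i* (cos x * cos y * sin z).

Definition gate_entry (d0 d1 d2 d3 : C) (a b a' b' : nat) : C :=
  match a, b, a', b' with
  | 0%N, 0%N, 0%N, 0%N | 1%N, 1%N, 1%N, 1%N => d0 + d3
  | 0%N, 0%N, 1%N, 1%N | 1%N, 1%N, 0%N, 0%N => d1 - d2
  | 0%N, 1%N, 0%N, 1%N | 1%N, 0%N, 1%N, 0%N => d0 - d3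
  | 0%N, 1%N, 1%N, 0%N | 1%N, 0%N, 0%N, 1%N => d1 + d2
  | _, _, _, _ => 0
  end.

Lemma Uxyz_entry x y z (a b a' b' : 'I_2) :
  Uxyz x y z (mxtens_index (a, b)) (mxtens_index (a', b')) =
  gate_entry (c0 x y z) (c1 x y z) (c2 x y z) (c3 x y z) a b a' b'.
Proof.
have ii : 'i * 'i = -1 :> C by rewrite -expr2 sqr_i.
rewrite /Uxyz summxE !big_ord_recl big_ord0 !mxE !mxtens_indexK /=.
case: a => [[|[|//]] ?]; case: b => [[|[|//]] ?];
case: a' => [[|[|//]] ?]; case: b' => [[|[|//]] ?] /=.
all: rewrite /gate_entry /coef_c /= -/(c0 x y z) -/(c1 x y z) -/(c2 x y z) -/(c3 x y z).
all: rewrite ?mulr0 ?mul0r ?mulr1 ?mul1r ?addr0 ?add0r ?mulNr ?mulrN ?mulrNN ?ii ?mulrN1; ring.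
Qed.

Definition amp (r : nat) (t : R) : R := if r == 0%N then cos t else sin t.

Definition chi_entry x y z al be (a ra b rb : nat) : C :=
  gate_entry (c0 x y z) (c1 x y z) (c2 x y z) (c3 x y z) a b ra rb
    * (amp ra al)%:C * (amp rb be)%:C.

Lemma chiE x y z al be (a ra b rb : 'I_2) :
  chi x y z al be a ra b rb = chi_entry x y z al be a ra b rb.
Proof.
rewrite /chi !big_ord_recl !big_ord0 !Uxyz_entry /bell /chi_entry.
by case: ra => [[|[|//]] ?]; case: rb => [[|[|//]] ?] /=;
  rewrite /amp /bump ?leq0n /= ?mulr0 ?mul0r ?addr0 ?add0r.
Qed.
End ReducedState.

Section Blocks.
Variable R : realType.
Local Notation C := R[i].
Variables x y z : R.
Local Notation u := (c0 x y z + c3 x y z).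
Local Notation w := (c0 x y z - c3 x y z).
Local Notation v := (c1 x y z - c2 x y z).
Local Notation t := (c1 x y z + c2 x y z).

(* The index [k] of [B R_B] stands for [(k %/ 2, k %% 2)], as in [mxtens_index]. *)
Definition rho_entry al be (k l : nat) : C :=
  \sum_(a < 2) \sum_(ra < 2) chi_entry x y z al be a ra (k %/ 2) (k %% 2)
                               * (chi_entry x y z al be a ra (l %/ 2) (l %% 2))^*%C.

Lemma rhoBRB_entry al be (k l : 'I_(2 * 2)) : rhoBRB x y z al be k l = rho_entry al be k l.
Proof.
rewrite /rhoBRB mxE; apply: eq_bigr => a _; apply: eq_bigr => ra _.
by rewrite !chiE; case: (chi_entry _ _ _ _ _ _ _ _ _).
Qed.

Ltac rho_ring := rewrite /rho_entry !big_ord_recl !big_ord0 /chi_entry /gate_entry /amp /=;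
  rewrite /blk_trace /blk_det ?(rmorphD, rmorphB, rmorphN, rmorphM, rmorphXn) /=;
  rewrite ?conjc_real ?abs2C ?(rmorphD, rmorphB, rmorphN, rmorphM) /=; ring.

Lemma rho_entry_offblock al be (k l : nat) : (k < 4)%N -> (l < 4)%N ->
  (k \in [:: 0; 3]%N) != (l \in [:: 0; 3]%N) -> rho_entry al be k l = 0.
Proof. by move: k l => [|[|[|[|k]]]] [|[|[|[|l]]]] //= _ _ _; rho_ring. Qed.

Lemma rho_trace_even al be :
  rho_entry al be 0 0 + rho_entry al be 3 3 = (blk_trace (abs2 u) (abs2 w) al be)%:C.
Proof. by rho_ring. Qed.

Lemma rho_det_even al be :
  rho_entry al be 0 0 * rho_entry al be 3 3 - rho_entry al be 0 3 * rho_entry al be 3 0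
    = (blk_det (abs2 (u ^+ 2 - w ^+ 2)) al be)%:C.
Proof. by rho_ring. Qed.

Lemma rho_trace_odd al be :
  rho_entry al be 1 1 + rho_entry al be 2 2 = (blk_trace (abs2 v) (abs2 t) al be)%:C.
Proof. by rho_ring. Qed.

Lemma rho_det_odd al be :
  rho_entry al be 1 1 * rho_entry al be 2 2 - rho_entry al be 1 2 * rho_entry al be 2 1
    = (blk_det (abs2 (v ^+ 2 - t ^+ 2)) al be)%:C.
Proof. by rho_ring. Qed.

Lemma char_poly_rhoBRB al be : char_poly (rhoBRB x y z al be) =
  ('X ^+ 2 - ((blk_trace (abs2 u) (abs2 w) al be)%:C)%:P * 'X
     + ((blk_det (abs2 (u ^+ 2 - w ^+ 2)) al be)%:C)%:P) *
  ('X ^+ 2 - ((blk_trace (abs2 v) (abs2 t) al be)%:C)%:P * 'X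
     + ((blk_det (abs2 (v ^+ 2 - t ^+ 2)) al be)%:C)%:P).
Proof.
pose F (i j : nat) := 'X *+ (i == j)%N - (rho_entry al be i j)%:P.
rewrite /char_poly; have := rhoBRB_entry al be; move: (rhoBRB x y z al be) => M M_entry.
have -> : char_poly_mx M = \matrix_(i < 4, j < 4) F i j.
  by apply/matrixP => i j; rewrite !mxE M_entry.
rewrite (@det_mx4_blocks _ F) /F /=; try by rewrite rho_entry_offblock ?polyC0 ?subr0.
rewrite -rho_trace_even -rho_det_even -rho_trace_odd -rho_det_odd.
by rewrite !(polyCD, polyCB, polyCM); ring.
Qed.

Lemma Ent_blocks al be : Ent x y z al be =
  quad_entropy (blk_trace (abs2 u) (abs2 w) al be) (blk_det (abs2 (u ^+ 2 - w ^+ 2)) al be) +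
  quad_entropy (blk_trace (abs2 v) (abs2 t) al be) (blk_det (abs2 (v ^+ 2 - t ^+ 2)) al be).
Proof. by apply: vN_entropy_quad2; rewrite ?blk_disc_ge0 ?char_poly_rhoBRB. Qed.

End Blocks.

Local Open Scope classical_set_scope.

Lemma sup_eq_max (R : realType) (A : set R) (m : R) :
  A m -> (forall a, A a -> a <= m) -> sup A = m.
Proof.
move=> Am m_ub; apply/le_anti/andP; split; first by apply: ge_sup; [exists m | exact: m_ub].
by apply: ub_le_sup => //; exists m => a /m_ub.
Qed.

Section Reflection.
Variables (R : realType) (f : R -> R -> R).
Hypothesis f_compl : forall a b, f (pi / 2 - a) (pi / 2 - b) = f a b.

Let pi4_lt_pi2 : pi / 4 < pi / 2 :> R.
Proof. by rewrite ltr_pM2l ?pi_gt0 // ltf_pV2 ?posrE // ltr_nat. Qed.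

Lemma image_square_halfl :
  [set f p.1 p.2 | p in [set p : R * R | 0 <= p.1 <= pi / 2 /\ 0 <= p.2 <= pi / 2]]
  = [set f p.1 p.2 | p in [set p : R * R | 0 <= p.1 <= pi / 4 /\ 0 <= p.2 <= pi / 2]].
Proof.
apply/seteqP; split=> _ [[a b] /= [/andP[a_ge0 a_le] /andP[b_ge0 b_le]] <-].
- have [a_le4|a_gt4] := leP a (pi / 4); first by exists (a, b) => //=; rewrite a_ge0 b_ge0.
  exists (pi / 2 - a, pi / 2 - b); rewrite /= ?f_compl //.
  by split; apply/andP; split; lra.
- by exists (a, b) => //=; rewrite a_ge0 b_ge0 b_le (le_trans a_le) ?ltW.
Qed.

Lemma image_square_halfr :
  [set f p.1 p.2 | p in [set p : R * R | 0 <= p.1 <= pi / 2 /\ 0 <= p.2 <= pi / 2]]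
  = [set f p.1 p.2 | p in [set p : R * R | 0 <= p.1 <= pi / 2 /\ 0 <= p.2 <= pi / 4]].
Proof.
apply/seteqP; split=> _ [[a b] /= [/andP[a_ge0 a_le] /andP[b_ge0 b_le]] <-].
- have [b_le4|b_gt4] := leP b (pi / 4); first by exists (a, b) => //=; rewrite a_ge0 b_ge0.
  exists (pi / 2 - a, pi / 2 - b); rewrite /= ?f_compl //.
  by split; apply/andP; split; lra.
- by exists (a, b) => //=; rewrite a_ge0 b_ge0 a_le (le_trans b_le) ?ltW.
Qed.

End Reflection.

Section Boundary.
Variable R : realType.
Variables x y z : R.
Local Notation E := (Ent x y z).
Local Notation U := (cos (x - y) ^+ 2).
Local Notation W := (cos (x + y) ^+ 2).
Local Notation mixUW be := (cos be ^+ 2 * U + sin be ^+ 2 * W).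

Lemma abs2_c0Dc3 : abs2 (c0 x y z + c3 x y z) = U.
Proof. by rewrite unlock /c0 /c3 /= cosB -[RHS]mulr1 -(cos2Dsin2 z); ring. Qed.

Lemma abs2_c0Bc3 : abs2 (c0 x y z - c3 x y z) = W.
Proof. by rewrite unlock /c0 /c3 /= cosD -[RHS]mulr1 -(cos2Dsin2 z); ring. Qed.

Lemma abs2_c1Bc2 : abs2 (c1 x y z - c2 x y z) = sin (x - y) ^+ 2.
Proof. by rewrite unlock /c1 /c2 /= sinB -[RHS]mulr1 -(cos2Dsin2 z); ring. Qed.

Lemma abs2_c1Dc2 : abs2 (c1 x y z + c2 x y z) = sin (x + y) ^+ 2.
Proof. by rewrite unlock /c1 /c2 /= sinD -[RHS]mulr1 -(cos2Dsin2 z); ring. Qed.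

Lemma Ent_compl al be : E (pi / 2 - al) (pi / 2 - be) = E al be.
Proof. by rewrite !Ent_blocks !blk_trace_compl !blk_det_compl. Qed.

Lemma EntC al be : E al be = E be al.
Proof.
by rewrite !Ent_blocks; congr (quad_entropy _ _ + quad_entropy _ _);
  rewrite (blk_traceC, blk_detC).
Qed.

Lemma Ent_pi4_le be : E (pi / 4) be <= E (pi / 4) (pi / 4).
Proof.
rewrite !Ent_blocks; apply: lerD.
all: rewrite [in X in _ <= X](blk_trace_pi4 _ _ (pi / 4)) blk_trace_pi4; apply: quad_entropy_le.
all: try by [rewrite divr_ge0 ?addr_ge0 ?abs2_ge0 | exact/blk_det_ge0/abs2_ge0].
all: try exact/blk_det_pi4_le/abs2_ge0.
all: by rewrite -(blk_trace_pi4 _ _ (pi / 4)) blk_disc_ge0.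
Qed.

Lemma Ent_alpha0 be : E 0 be = pair_entropy (mixUW be) (1 - mixUW be).
Proof.
rewrite Ent_blocks !blk_det_alpha0 !quad_entropy_det0 ?blk_trace_ge0 ?abs2_ge0 //.
rewrite pair_entropy_add0 !blk_trace_alpha0 abs2_c0Dc3 abs2_c0Bc3 abs2_c1Bc2 abs2_c1Dc2.
by rewrite !sin2cos2; congr pair_entropy; ring.
Qed.

Lemma mixUW_ge0 be : 0 <= mixUW be.
Proof. by rewrite addr_ge0 // mulr_ge0 ?sqr_ge0. Qed.

Lemma mixUW_le1 be : mixUW be <= 1.
Proof.
have := cos2Dsin2 be; have := cos2Dsin2 (x - y); have := cos2Dsin2 (x + y).
have := sqr_ge0 (sin (x - y)); have := sqr_ge0 (sin (x + y)).
have := sqr_ge0 (cos be); have := sqr_ge0 (sin be).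
move: (cos be ^+ 2) (sin be ^+ 2) U W (sin (x - y) ^+ 2) (sin (x + y) ^+ 2) => c s u w u' w'.
nra.
Qed.

Lemma Ent_alpha0_le1 be : E 0 be <= 1.
Proof. by rewrite Ent_alpha0 binary_entropy_le1 // mixUW_ge0 mixUW_le1. Qed.

Lemma Ent_alpha0_le_pihalf be : W <= U -> 2^-1 <= W -> E 0 be <= E 0 (pi / 2).
Proof.
move=> W_le_U W_ge; rewrite !Ent_alpha0 cos_pihalf sin_pihalf expr0n expr1n /= mul0r mul1r add0r.
apply: pair_entropy_le; rewrite ?mixUW_ge0 ?subr_ge0 ?mixUW_le1 //; first by ring.
(* [mixUW be] lies in [[W, U]], on the side of [1/2] where [t (1 - t)] decreases *)
have : W <= mixUW be.
  have := cos2Dsin2 be; have := sqr_ge0 (cos be); move: (cos be ^+ 2) (sin be ^+ 2) => c s.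
  nra.
have := mixUW_le1 be; move: (mixUW be) => m; nra.
Qed.

Lemma Ent_alpha0_eq1 : W <= 2^-1 <= U -> W < U -> exists2 be, 0 <= be <= pi / 2 & E 0 be = 1.
Proof.
case/andP=> W_le U_ge W_lt_U; have UW_gt0 : 0 < U - W by rewrite subr_gt0.
have [|be be_itv cos_be] := exists_cos_sqr (k := (2^-1 - W) / (U - W)).
  apply/andP; split; first by rewrite divr_ge0 ?subr_ge0 // ltW.
  by rewrite ler_pdivrMr // mul1r lerD2r.
exists be => //; rewrite Ent_alpha0 sin2cos2 cos_be.
rewrite (_ : _ * U + _ = 2^-1); last by field; rewrite gt_eqF.
by rewrite (_ : 1 - 2^-1 = 2^-1) ?pair_entropy_half //; field.
Qed.

Lemma sup_Ent_boundary (b0 be0 : R) : 0 <= be0 <= pi / 2 -> E 0 be0 = b0 ->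
  (forall be, E 0 be <= b0) ->
  sup [set E p.1 p.2 | p in [set p : R * R | (0 <= p.1 <= pi / 4 /\ 0 <= p.2 <= pi / 2) /\
                                            (p.1 = 0 \/ p.1 = pi / 4 \/ p.2 = 0 \/ p.2 = pi / 4)]]
    = Num.max b0 (E (pi / 4) (pi / 4)).
Proof.
move=> be0_itv E_be0 E0_le; have pi_pos := pi_gt0 R.
apply: sup_eq_max => [|_ [[a b] /= [_ edge] <-]].
  case: (leP b0 (E (pi / 4) (pi / 4))) => _.
    by exists (pi / 4, pi / 4) => //=; split; [split; apply/andP; split; lra | right; left].
  by exists (0, be0) => //=; split; [split; rewrite ?lexx; lra | left].
rewrite le_max; case: edge => [->|[->|[->|->]]].
- by rewrite E0_le.
- by rewrite Ent_pi4_le orbT.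
- by rewrite EntC E0_le.
- by rewrite EntC Ent_pi4_le orbT.
Qed.

End Boundary.

Lemma normalized_cos_sqr (R : realType) (x y z : R) : normalized x y z ->
  cos (x + y) ^+ 2 < cos (x - y) ^+ 2 /\ 2^-1 <= cos (x - y) ^+ 2.
Proof.
move=> [x_le [y_le_x [z_le_y [z_ge0 [y_gt0 y_lt]]]]]; have pi_pos := pi_gt0 R.
have in_quarter t : 0 < t <= pi / 4 -> 0 < cos t /\ 0 < sin t.
  by move=> /andP[t_gt0 t_le]; split; [apply: cos_gt0_pihalf | apply: sin_gt0_pihalf];
    apply/andP; split; lra.
have [cx sx] : 0 < cos x /\ 0 < sin x by apply: in_quarter; apply/andP; split; lra.
have [cy sy] : 0 < cos y /\ 0 < sin y by apply: in_quarter; apply/andP; split; lra.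
split.
  rewrite cosD cosB -subr_gt0.
  have -> : (cos x * cos y + sin x * sin y) ^+ 2 - (cos x * cos y - sin x * sin y) ^+ 2
      = 4 * (cos x * cos y) * (sin x * sin y) by ring.
  by rewrite !mulr_gt0.
have : 0 <= cos (2 * (x - y)) by apply: cos_ge0_pihalf; apply/andP; split; lra.
rewrite cos_twice; lra.
Qed.

Theorem lemma4 (R : realType) (x y z : R) :
  normalized x y z -> coef_c x y z 2 = coef_c x y z 3 ->
  let E := Ent x y z in
  (sup [set E p.1 p.2 | p in [set p : R * R | 0 <= p.1 <= pi / 2 /\ 0 <= p.2 <= pi / 2]]
     = sup [set E p.1 p.2 | p in [set p : R * R | 0 <= p.1 <= pi / 4 /\ 0 <= p.2 <= pi / 2]]
   /\
   sup [set E p.1 p.2 | p in [set p : R * R | 0 <= p.1 <= pi / 2 /\ 0 <= p.2 <= pi / 2]]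
     = sup [set E p.1 p.2 | p in [set p : R * R | 0 <= p.1 <= pi / 2 /\ 0 <= p.2 <= pi / 4]])
  /\
  sup [set E p.1 p.2 | p in [set p : R * R | (0 <= p.1 <= pi / 4 /\ 0 <= p.2 <= pi / 2) /\
                                             (p.1 = 0 \/ p.1 = pi / 4 \/ p.2 = 0 \/ p.2 = pi / 4)]]
    = (if cos (2 * x + 2 * y) <= 0 then Num.max 1 (E (pi / 4) (pi / 4))
       else Num.max (E 0 (pi / 2)) (E (pi / 4) (pi / 4))).
Proof.
move=> xyz_normalized _ E; split.
  by split; congr sup; [apply: image_square_halfl | apply: image_square_halfr]; apply: Ent_compl.
have [W_lt_U U_ge] := normalized_cos_sqr xyz_normalized.
rewrite -mulrDr cos_twice; case: ifPn => [cos_le0|]; last rewrite -ltNge => cos_gt0.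
- have [be0 be0_itv E_be0] : exists2 be, 0 <= be <= pi / 2 & E 0 be = 1.
    by apply: Ent_alpha0_eq1 _ W_lt_U; apply/andP; split; lra.
  by apply: (sup_Ent_boundary be0_itv E_be0) => be; apply: Ent_alpha0_le1.
- apply: sup_Ent_boundary (erefl _) _ => [|be]; first by rewrite lexx andbT; have := pi_gt0 R; lra.
  by apply: Ent_alpha0_le_pihalf; [exact: ltW | lra].
Qed.
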